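(* Let $\pi:F^n\to F^d$ be a coordinate projection and let $X\subseteq F^n$ be a $\pi$-special submanifold of dimension $d$. Let $f:X\to F$ be a positive definable continuous function. Then the function $g:\pi(X)\to F$ defined by $g(t)=\inf\{f(x)\;|\;x\in X\cap\pi^{-1}(t)\}$ is a positive definable continuous function.
   Context: Throughout, $\mathcal F=(F,<,+,\cdot,0,1,\ldots)$ is a definably complete locally o-minimal expansion of an ordered field: locally o-minimal means that for every definable $X\subseteq F$ and every $a\in F$ there is an open interval $I\ni a$ such that $X\cap I$ is a finite union of points and open intervals; definably complete means every definable subset of $F$ has a supremum and an infimum in $F\cup\{\pm\infty\}$. ''Definable'' means definable with parameters. Dimension: for nonempty definable $X\subseteq F^n$, $\dim X$ is the largest $d$ such that $\pi(X)$ has nonempty interior for some coordinate projection $\pi:F^n\to F^d$. Special submanifolds: Let $X\subseteq F^n$ be definable of dimension $d$ and $\pi:F^n\to F^d$ a coordinate projection; after permuting coordinates assume $\pi$ is the projection onto the first $d$ coordinates. First suppose $X\subseteq F^d\times(0,1)^{n-d}$. A point $(a,b)\in F^d\times F^{n-d}$ is $(X,\pi)$-normal if there are definable open neighborhoods $A$ of $a$ in $F^d$ and $B$ of $b$ in $F^{n-d}$ such that either $(A\times B)\cap X=\emptyset$ or $(A\times B)\cap X$ is the graph of a definable continuous map $A\to B$. A point $a\in F^d$ is $(X,\pi)$-good if every point of $\{a\}\times F^{n-d}$ is $(X,\pi)$-normal. For general $X$, fix a definable homeomorphism (indeed $\mathcal C^\infty$ diffeomorphism) $\phi:F\to(0,1)$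 and call $a$ $(X,\pi)$-good if it is $(\psi(X),\pi)$-good, where $\psi=\mathrm{id}_{F^d}\times\phi^{n-d}$. $X$ is a $\pi$-special submanifold if every point of $\pi(X)$ is $(X,\pi)$-good. *)

From HB Require Import structures.
From mathcomp Require Import all_boot all_order all_algebra.
Set Implicit Arguments. Unset Strict Implicit. Unset Printing Implicit Defensive.
Import Order.TTheory GRing.Theory Num.Theory.
Local Open Scope ring_scope.

(* An expansion of the ordered field F is given by its family of definable
   (with parameters) sets D n of subsets of F^n: closed under boolean
   operations, under preimages and images of coordinate maps
   x |-> x \o s (these give cylinders, permutations, diagonals, projections),
   and containing the points, the order and the graphs of + and *. *)
Record expansion (F : realFieldType) := Expansion {
  D : forall n : nat, (('I_n -> F) -> Prop) -> Prop;
  D_compl : forall n A, D A -> D (fun x : 'I_n -> F => ~ A x);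
  D_union : forall n A B, D A -> D B -> D (fun x : 'I_n -> F => A x \/ B x);
  D_preim : forall m n (s : 'I_n -> 'I_m) (A : ('I_n -> F) -> Prop),
      D A -> D (fun y : 'I_m -> F => A (fun i => y (s i)));
  D_image : forall m n (s : 'I_n -> 'I_m) (A : ('I_m -> F) -> Prop),
      D A -> D (fun y : 'I_n -> F => exists x, A x /\ forall i, x (s i) = y i);
  D_point : forall c : F, D (fun x : 'I_1 -> F => x ord0 = c);
  D_lt : D (fun x : 'I_2 -> F => x (inord 0) < x (inord 1));
  D_add : D (fun x : 'I_3 -> F => x (inord 0) + x (inord 1) = x (inord 2));
  D_mul : D (fun x : 'I_3 -> F => x (inord 0) * x (inord 1) = x (inord 2))
}.

Definition defI (F : realFieldType) (S : expansion F) (I : finType)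
  (A : (I -> F) -> Prop) : Prop :=
  D S (fun x : 'I_#|I| -> F => A (fun i => x (enum_rank i))).

Definition is_lub (F : realFieldType) (A : F -> Prop) (s : F) :=
  (forall y, A y -> y <= s) /\ (forall s', (forall y, A y -> y <= s') -> s <= s').
Definition is_glb (F : realFieldType) (A : F -> Prop) (s : F) :=
  (forall y, A y -> s <= y) /\ (forall s', (forall y, A y -> s' <= y) -> s' <= s).

Definition definably_complete (F : realFieldType) (S : expansion F) : Prop :=
  forall A : F -> Prop, D S (fun x : 'I_1 -> F => A (x ord0)) ->
    (exists y, A y) ->
    ((exists b, forall y, A y -> y <= b) -> exists s, is_lub A s) /\
    ((exists b, forall y, A y -> b <= y) -> exists s, is_glb A s).

Definition locally_o_minimal (F : realFieldType) (S : expansion F) : Prop :=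
  forall A : F -> Prop, D S (fun x : 'I_1 -> F => A (x ord0)) ->
  forall a : F, exists l u : F, l < a < u /\
    exists (pts : seq F) (ivs : seq (F * F)),
      forall y, (A y /\ l < y < u) <->
        (y \in pts \/ has (fun p => (p.1 < y) && (y < p.2)) ivs).

Record DCLOM (F : realFieldType) := {
  dc_struct :> expansion F;
  dc_complete : definably_complete dc_struct;
  dc_lom : locally_o_minimal dc_struct
}.

Definition openI (F : realFieldType) (I : finType) (U : (I -> F) -> Prop) :=
  forall x, U x -> exists2 e : F, 0 < e &
    forall y, (forall i, `|y i - x i| < e) -> U y.

Definition nonempty_interior (F : realFieldType) (I : finType) (U : (I -> F) -> Prop) :=
  exists x, exists2 e : F, 0 < e & forall y, (forall i, `|y i - x i| < e) -> U y.

Definition cont_on (F : realFieldType) (I J : finType) (A : (I -> F) -> Prop)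
  (h : (I -> F) -> (J -> F)) :=
  forall x, A x -> forall e : F, 0 < e -> exists2 dl : F, 0 < dl &
    forall y, A y -> (forall i, `|y i - x i| < dl) -> forall j, `|h y j - h x j| < e.

Definition contF_on (F : realFieldType) (I : finType) (A : (I -> F) -> Prop)
  (f : (I -> F) -> F) :=
  forall x, A x -> forall e : F, 0 < e -> exists2 dl : F, 0 < dl &
    forall y, A y -> (forall i, `|y i - x i| < dl) -> `|f y - f x| < e.

Definition def_funF (F : realFieldType) (S : expansion F) (I : finType)
  (A : (I -> F) -> Prop) (f : (I -> F) -> F) :=
  defI S (fun z : (I + 'I_1)%type -> F =>
            A (fun i => z (inl i)) /\ z (inr ord0) = f (fun i => z (inl i))).

Definition def_map (F : realFieldType) (S : expansion F) (I J : finType)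
  (A : (I -> F) -> Prop) (h : (I -> F) -> (J -> F)) :=
  defI S (fun z : (I + J)%type -> F =>
            A (fun i => z (inl i)) /\ forall j, z (inr j) = h (fun i => z (inl i)) j).

(* coordinate projection F^n -> F^d : x |-> (x_{s 0}, ..., x_{s (d-1)}),
   s strictly increasing *)
Definition coord_proj (n d : nat) (s : 'I_d -> 'I_n) :=
  forall i j : 'I_d, (i < j)%N -> (s i < s j)%N.

Definition projset (F : realFieldType) (n d : nat) (s : 'I_d -> 'I_n)
  (X : ('I_n -> F) -> Prop) : ('I_d -> F) -> Prop :=
  fun t => exists x, X x /\ forall i, x (s i) = t i.

Definition definable (F : realFieldType) (S : expansion F) n (X : ('I_n -> F) -> Prop) :=
  D S X.

Definition has_dim (F : realFieldType) (n : nat) (X : ('I_n -> F) -> Prop) (d : nat) :=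
  (exists s : 'I_d -> 'I_n, coord_proj s /\ nonempty_interior (projset s X)) /\
  (forall (d' : nat) (s : 'I_d' -> 'I_n),
      coord_proj s -> nonempty_interior (projset s X) -> (d' <= d)%N).

(* complementary coordinates of s (the "last n - d" coordinates) *)
Definition Comp (n d : nat) (s : 'I_d -> 'I_n) : finType :=
  {i : 'I_n | i \notin codom s}.

Definition def_homeo01 (F : realFieldType) (S : expansion F) (phi : F -> F) :=
  def_funF S (fun _ : 'I_1 -> F => True) (fun x => phi (x ord0)) /\
  (forall t, 0 < phi t < 1) /\
  (forall y, 0 < y < 1 -> exists t, phi t = y) /\
  (forall t t', phi t = phi t' -> t = t') /\
  (forall t (e : F), 0 < e -> exists2 dl : F, 0 < dl &
      forall t', `|t' - t| < dl -> `|phi t' - phi t| < e) /\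
  (forall t (e : F), 0 < e -> exists2 dl : F, 0 < dl &
      forall t', `|phi t' - phi t| < dl -> `|t' - t| < e).

Definition psiset (F : realFieldType) (n d : nat) (s : 'I_d -> 'I_n) (phi : F -> F)
  (X : ('I_n -> F) -> Prop) : ('I_n -> F) -> Prop :=
  fun x => exists x', X x' /\ (forall i, x (s i) = x' (s i)) /\
    (forall j : Comp s, x (val j) = phi (x' (val j))).

Definition normal_pt (F : realFieldType) (S : expansion F) (n d : nat)
  (s : 'I_d -> 'I_n) (Y : ('I_n -> F) -> Prop) (a : 'I_d -> F) (b : Comp s -> F) :=
  exists (A : ('I_d -> F) -> Prop) (B : (Comp s -> F) -> Prop),
    [/\ D S A, openI A & A a] /\ [/\ defI S B, openI B & B b] /\
    ((forall x, Y x -> ~ (A (fun i => x (s i)) /\ B (fun j => x (val j)))) \/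
     exists h : ('I_d -> F) -> (Comp s -> F),
       [/\ forall a', A a' -> B (h a'),
           cont_on A h,
           def_map S A h &
           forall a' b', A a' -> B b' ->
             ((exists x, Y x /\ (forall i, x (s i) = a' i) /\
                                (forall j, x (val j) = b' j))
              <-> (forall j, b' j = h a' j))]).

Arguments normal_pt {F} S {n d} s Y a b.

Definition good_pt (F : realFieldType) (S : expansion F) (n d : nat)
  (s : 'I_d -> 'I_n) (phi : F -> F) (X : ('I_n -> F) -> Prop) (a : 'I_d -> F) :=
  forall b : Comp s -> F, normal_pt S s (psiset s phi X) a b.

Definition special_submanifold (F : realFieldType) (S : expansion F) (n d : nat)
  (s : 'I_d -> 'I_n) (phi : F -> F) (X : ('I_n -> F) -> Prop) :=
  forall a, projset s X a -> good_pt S s phi X a.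

From HB Require Import structures.
From mathcomp Require Import all_boot all_order all_algebra.
From Stdlib Require Import Classical FunctionalExtensionality PropExtensionality ClassicalEpsilon.
From mathcomp Require Import lra.
Import Order.TTheory GRing.Theory Num.Theory.
Local Open Scope ring_scope.
Set Implicit Arguments. Unset Strict Implicit.

Definition sumf (I J K : Type) (g : I -> K) (h : J -> K) : I + J -> K :=
  fun z => match z with inl i => g i | inr j => h j end.

Section Definability.
Variables (F : realFieldType) (S : expansion F).

Lemma D_ext n (P Q : ('I_n -> F) -> Prop) :
  (forall x, P x <-> Q x) -> D S P -> D S Q.
Proof.
move=> PQ; suff -> : Q = P by [].
by apply: functional_extensionality => x; apply: propositional_extensionality; split; apply PQ.
Qed.

Lemma defI_ext (I : finType) (P Q : (I -> F) -> Prop) :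
  (forall x, P x <-> Q x) -> defI S P -> defI S Q.
Proof. by move=> PQ; apply: D_ext => x; apply: PQ. Qed.

Lemma defI_preim (I J : finType) (sg : I -> J) (P : (I -> F) -> Prop) :
  defI S P -> defI S (fun y : J -> F => P (fun i => y (sg i))).
Proof.
move=> DP; apply: D_ext (D_preim (fun k => enum_rank (sg (enum_val k))) DP) => y /=.
suff -> : (fun i => y (enum_rank (sg (enum_val (enum_rank i))))) = (fun i => y (enum_rank (sg i))) by [].
by apply: functional_extensionality => i; rewrite enum_rankK.
Qed.

Lemma defI_not (I : finType) (P : (I -> F) -> Prop) :
  defI S P -> defI S (fun x => ~ P x).
Proof. exact: D_compl. Qed.

Lemma defI_or (I : finType) (P Q : (I -> F) -> Prop) :
  defI S P -> defI S Q -> defI S (fun x => P x \/ Q x).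
Proof. exact: D_union. Qed.

Lemma defI_and (I : finType) (P Q : (I -> F) -> Prop) :
  defI S P -> defI S Q -> defI S (fun x => P x /\ Q x).
Proof.
move=> DP DQ; apply: defI_ext (defI_not (defI_or (defI_not DP) (defI_not DQ))) => x.
by split=> [nPQ|]; [split; apply: NNPP => ?; apply: nPQ|]; tauto.
Qed.

Lemma defI_imp (I : finType) (P Q : (I -> F) -> Prop) :
  defI S P -> defI S Q -> defI S (fun x => P x -> Q x).
Proof.
move=> DP DQ; apply: defI_ext (defI_or (defI_not DP) DQ) => x.
by split; [tauto | case: (classic (P x)); tauto].
Qed.

Lemma defI_ex (I J : finType) (P : ((I + J)%type -> F) -> Prop) :
  defI S P -> defI S (fun x : I -> F => exists w : J -> F, P (sumf x w)).
Proof.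
move=> DP; have := D_image (fun k : 'I_#|I| => enum_rank (inl (enum_val k) : (I + J)%type)) DP.
apply: D_ext => y; split.
  case=> x [Px xy]; exists (fun j => x (enum_rank (inr j : (I + J)%type))).
  suff <- : (fun z => x (enum_rank z)) =
            sumf (fun i => y (enum_rank i)) (fun j => x (enum_rank (inr j : (I + J)%type))) by [].
  by apply: functional_extensionality => -[i|j] //=; rewrite -xy enum_rankK.
case=> w Pw; exists (fun k => sumf (fun i => y (enum_rank i)) w (enum_val k)); split.
  suff -> : (fun z => sumf (fun i => y (enum_rank i)) w (enum_val (enum_rank z))) =
            sumf (fun i => y (enum_rank i)) w by [].
  by apply: functional_extensionality => z; rewrite enum_rankK.
by move=> k /=; rewrite enum_rankK /= enum_valK.
Qed.

Lemma defI_all (I J : finType) (P : ((I + J)%type -> F) -> Prop) :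
  defI S P -> defI S (fun x : I -> F => forall w : J -> F, P (sumf x w)).
Proof.
move=> DP; apply: defI_ext (defI_not (defI_ex (defI_not DP))) => x.
by split=> [nP w|allP [w]]; [apply: NNPP => ?; apply: nP; exists w | apply].
Qed.

Lemma defI_of_D n (P : ('I_n -> F) -> Prop) : D S P -> defI S P.
Proof. exact: D_preim. Qed.

Lemma D_of_defI n (P : ('I_n -> F) -> Prop) : defI S P -> D S P.
Proof.
move=> DP; apply: D_ext (D_preim (fun k : 'I_#|'I_n| => enum_val k) DP) => y /=.
by rewrite (_ : (fun i => _) = y) //; apply: functional_extensionality => i; rewrite enum_rankK.
Qed.

Lemma defI_true (I : finType) : defI S (fun _ : I -> F => True).
Proof.
have D0 : D S (fun _ : 'I_0 -> F => True).
  apply: D_ext (D_image (fun _ : 'I_0 => ord0) (D_point S 0)) => y.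
  by split=> // _; exists (fun _ => 0); split=> // -[].
exact: (defI_preim (fun i : 'I_0 => False_rect I (match i with Ordinal _ h => notF h end))
          (defI_of_D D0)).
Qed.

Lemma defI_allfin (I J : finType) (P : J -> (I -> F) -> Prop) :
  (forall j, defI S (P j)) -> defI S (fun x => forall j, P j x).
Proof.
move=> DP; suff Dseq : forall r : seq J, defI S (fun x => forall j, j \in r -> P j x).
  by apply: defI_ext (Dseq (enum J)) => x; split=> Px j; [apply: Px; rewrite mem_enum | move=> _].
elim=> [|j r IHr]; first by apply: defI_ext (defI_true I) => x.
apply: defI_ext (defI_and (DP j) IHr) => x; split=> [[Pjx Prx] k|Px].
  by rewrite in_cons => /orP[/eqP->|]; [|apply: Prx].
by split=> [|k kr]; apply: Px; rewrite in_cons ?eqxx ?kr ?orbT.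
Qed.

Lemma defI_lt (I : finType) (i j : I) : defI S (fun y : I -> F => y i < y j).
Proof.
have := defI_preim (fun k : 'I_2 => if val k == 0%N then i else j) (defI_of_D (D_lt S)).
by apply: defI_ext => y /=; rewrite !inordK.
Qed.

Lemma defI_le (I : finType) (i j : I) : defI S (fun y : I -> F => y i <= y j).
Proof. by apply: defI_ext (defI_not (defI_lt j i)) => y; rewrite leNgt; split=> /negP. Qed.

Lemma defI_eq (I : finType) (i j : I) : defI S (fun y : I -> F => y i = y j).
Proof.
apply: defI_ext (defI_and (defI_le i j) (defI_le j i)) => y.
by split=> [[le_ij le_ji]|->]; [apply/eqP; rewrite eq_le le_ij | ].
Qed.

Lemma defI_eqc (I : finType) (i : I) (c : F) : defI S (fun y : I -> F => y i = c).
Proof. exact: (defI_preim (fun _ : 'I_1 => i) (defI_of_D (D_point S c))). Qed.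

Lemma defI_param (I J : finType) (P : ((I + J)%type -> F) -> Prop) (c : J -> F) :
  defI S P -> defI S (fun x : I -> F => P (sumf x c)).
Proof.
move=> DP; have := defI_ex (defI_and DP (defI_allfin (fun j => defI_eqc (inr j : (I + J)%type) (c j)))).
apply: defI_ext => x; split=> [[w [Pw wc]]|Px]; last by exists c.
by suff <- : w = c by []; apply: functional_extensionality.
Qed.

Lemma defI_const_lt (I : finType) (c : F) (i : I) : defI S (fun y : I -> F => c < y i).
Proof. exact: (defI_param (fun _ : 'I_1 => c) (defI_lt (inr ord0 : (I + 'I_1)%type) (inl i))). Qed.

Lemma defI_le_const (I : finType) (c : F) (i : I) : defI S (fun y : I -> F => y i <= c).
Proof. exact: (defI_param (fun _ : 'I_1 => c) (defI_le (inl i : (I + 'I_1)%type) (inr ord0))). Qed.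

Lemma defI_subst_add (R : F -> F -> Prop) :
  (forall (J : finType) (u v : J), defI S (fun y : J -> F => R (y u) (y v))) ->
  forall (I : finType) (a b c : I), defI S (fun y : I -> F => R (y a) (y b + y c)).
Proof.
move=> DR I a b c; pose J := (I + 'I_1)%type.
have Dsum := defI_preim (fun k : 'I_3 => if val k == 0%N then inl b else if val k == 1%N
                              then inl c else inr ord0 : J) (defI_of_D (D_add S)).
have := defI_ex (defI_and Dsum (DR J (inl a) (inr ord0))).
apply: defI_ext => y /=; rewrite !inordK //=.
by split=> [[w [<-]]|Ry] //; exists (fun _ => y b + y c).
Qed.

Lemma defI_absdiff (I : finType) (i j k : I) : defI S (fun y : I -> F => `|y i - y j| < y k).
Proof.
have Dlt := @defI_subst_add (fun a b => a < b) (@defI_lt).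
apply: defI_ext (defI_and (Dlt _ i j k) (Dlt _ j i k)) => y.
by rewrite ltr_distl; split=> [[]|/andP[]] ? ?; [apply/andP|]; split; lra.
Qed.

Lemma defI_glb (I : finType) (A : (I -> F) -> F -> Prop) :
  defI S (fun z : (I + 'I_1)%type -> F => A (fun i => z (inl i)) (z (inr ord0))) ->
  defI S (fun z : (I + 'I_1)%type -> F => is_glb (A (fun i => z (inl i))) (z (inr ord0))).
Proof.
move=> DA; pose J := ((I + 'I_1) + 'I_1)%type.
pose shift := sumf (fun i => inl (inl i)) (fun _ => inr ord0) : (I + 'I_1)%type -> J.
pose lower (z : (I + 'I_1)%type -> F) := forall y, A (fun i => z (inl i)) y -> z (inr ord0) <= y.
have Dlower : defI S lower.
  have := defI_all (defI_imp (defI_preim shift DA) (defI_le (inl (inr ord0) : J) (inr ord0))).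
  by apply: defI_ext => z; split=> [low y|low w]; [exact: (low (fun _ => y)) | exact: low].
have := defI_all (defI_imp (defI_preim shift Dlower) (defI_le (inr ord0 : J) (inl (inr ord0)))).
move/(defI_and Dlower); apply: defI_ext => z.
split=> -[low great]; split=> //.
  by move=> s' ?; exact: (great (fun _ => s')).
by move=> w; exact: great.
Qed.

End Definability.

Section OrderFacts.
Variable F : realFieldType.

Lemma pos_min (a b : F) : 0 < a -> 0 < b -> exists2 m : F, 0 < m & m <= a /\ m <= b.
Proof.
move=> a0 b0; exists (Num.min a b); first by rewrite lt_min a0 b0.
by rewrite !ge_min !lexx ?orbT.
Qed.

Lemma pos_min_fin (J : finType) (P : J -> F -> Prop) :
  (forall j, exists2 r, 0 < r & P j r) ->
  (forall j r r', 0 < r' -> r' <= r -> P j r -> P j r') ->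
  exists2 r, 0 < r & forall j, P j r.
Proof.
move=> exP downP; suff [r r0 Pr] : exists2 r, 0 < r & forall j, j \in enum J -> P j r.
  by exists r => // j; apply: Pr; rewrite mem_enum.
elim: (enum J) => [|j l [r r0 Pr]]; first by exists 1.
have [rj rj0 Pj] := exP j; have [m m0 [mr mrj]] := pos_min r0 rj0.
exists m => // k; rewrite in_cons => /orP[/eqP->|kl]; first exact: downP Pj.
exact: downP (Pr k kl).
Qed.

Lemma glb_approx (A : F -> Prop) k e : is_glb A k -> 0 < e -> exists y, A y /\ y < k + e.
Proof.
move=> [_ great] e0; apply: NNPP => noy.
suff : k + e <= k by lra.
by apply: great => y Ay; rewrite leNgt; apply/negP => ?; apply: noy; exists y.
Qed.

Lemma glb_unique (A : F -> Prop) a b : is_glb A a -> is_glb A b -> a = b.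
Proof. by move=> [la ga] [lb gb]; apply/eqP; rewrite eq_le (gb _ la) (ga _ lb). Qed.

Lemma sup_of_infima_adherent (L : F -> F -> Prop) (cs : F) :
  (forall d d' c, 0 < d -> d <= d' -> L d c -> L d' c) ->
  (forall d, 0 < d -> d <= 1 -> exists k, is_glb (L d) k) ->
  is_lub (fun k => exists d, [/\ 0 < d, d <= 1 & is_glb (L d) k]) cs ->
  forall d e, 0 < d -> 0 < e -> exists c, L d c /\ `|c - cs| < e.
Proof.
move=> mono glbL [upper least] d e d0 e0.
have e2 : 0 < e / 2 by rewrite divr_gt0.
have [k [[d1 [d10 d11 glbk]] cs_k]] :
    exists k, (exists d, [/\ 0 < d, d <= 1 & is_glb (L d) k]) /\ cs - e / 2 < k.
  apply: NNPP => nok; suff : cs <= cs - e / 2 by lra.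
  by apply: least => k Kk; rewrite leNgt; apply/negP => ?; apply: nok; exists k.
have [d2 d20 [d2d d2d1]] := pos_min d0 d10.
have [k2 glbk2] := glbL d2 d20 (le_trans d2d1 d11).
have k_k2 : k <= k2 by apply: (proj2 glbk2) => c Lc; apply: (proj1 glbk); exact: mono Lc.
have k2_cs : k2 <= cs by apply: upper; exists d2; split => //; exact: le_trans d2d1 d11.
have [c [Lc ck2]] := glb_approx glbk2 e2.
exists c; split; first exact: mono Lc.
have := proj1 glbk2 c Lc; rewrite ltr_distl => ?; apply/andP; split; lra.
Qed.

End OrderFacts.

Section LimitPoints.
Variables (F : realFieldType) (S : expansion F) (dc : definably_complete S).

Lemma exists_glb (A : F -> Prop) : defI S (fun y : 'I_1 -> F => A (y ord0)) ->
  (exists y, A y) -> (exists b, forall y, A y -> b <= y) -> exists k, is_glb A k.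
Proof. by move=> DA neA; apply: (proj2 (dc (D_of_defI DA) neA)). Qed.

(* It is the supremum of the infima of the L d, d in (0,1]. *)
Lemma adherent_value (L : F -> F -> Prop) (M : F) :
  defI S (fun z : ('I_1 + 'I_1)%type -> F => L (z (inr ord0)) (z (inl ord0))) ->
  (forall d, 0 < d -> exists c, L d c) ->
  (forall d d' c, 0 < d -> d <= d' -> L d c -> L d' c) ->
  (forall d c, 0 < d -> d <= 1 -> L d c -> `|c| <= M) ->
  exists cs, forall d e, 0 < d -> 0 < e -> exists c, L d c /\ `|c - cs| < e.
Proof.
move=> DL neL mono bdL.
pose swap := sumf (fun _ => inr ord0) (fun _ => inl ord0) : ('I_1 + 'I_1)%type -> ('I_1 + 'I_1)%type.
have glbL d : 0 < d -> d <= 1 -> exists k, is_glb (L d) k.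
  move=> d0 d1; apply: exists_glb; [exact: (defI_param (fun _ => d) DL) | exact: neL |].
  by exists (- M) => c Lc; have := bdL d c d0 d1 Lc; rewrite ler_norml => /andP[].
pose infima k := exists d, [/\ 0 < d, d <= 1 & is_glb (L d) k].
have Dinfima : defI S (fun y : 'I_1 -> F => infima (y ord0)).
  have Dglb := defI_preim swap (defI_glb (A := fun x : 'I_1 -> F => L (x ord0)) (defI_preim swap DL)).
  have := defI_ex (defI_and (defI_and (defI_const_lt S 0 (inr ord0)) (defI_le_const S 1 (inr ord0))) Dglb).
  apply: defI_ext => y; split=> [[w [[? ?] ?]]|[d [? ? ?]]]; first by exists (w ord0).
  by exists (fun _ => d).
have [k1 glbk1] := glbL 1 ltr01 (lexx 1).
have ne_infima : exists k, infima k by exists k1, 1.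
have bd_infima : exists b, forall k, infima k -> k <= b.
  exists M => k [d [d0 d1 [lowk _]]]; have [c Lc] := neL d d0.
  by apply: le_trans (lowk c Lc) _; have := bdL d c d0 d1 Lc; rewrite ler_norml => /andP[].
have [cs lub_cs] := proj1 (dc (D_of_defI Dinfima) ne_infima) bd_infima.
by exists cs; apply: sup_of_infima_adherent.
Qed.

Definition drop_last m (K : F -> ('I_m.+1 -> F) -> Prop) (d : F) (y : 'I_m -> F) :=
  exists x, K d x /\ forall k, x (lift ord_max k) = y k.

Definition last_near m (K : F -> ('I_m.+1 -> F) -> Prop) (p' : 'I_m -> F) (d c : F) :=
  exists x, [/\ K d x, forall k, `|x (lift ord_max k) - p' k| < d & x ord_max = c].

Lemma defI_drop_last m (K : F -> ('I_m.+1 -> F) -> Prop) :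
  defI S (fun z : ('I_m.+1 + 'I_1)%type -> F => K (z (inr ord0)) (fun i => z (inl i))) ->
  defI S (fun z : ('I_m + 'I_1)%type -> F => drop_last K (z (inr ord0)) (fun i => z (inl i))).
Proof.
move=> DK; pose J := (('I_m + 'I_1) + 'I_m.+1)%type.
have DK' := defI_preim (sumf (fun i => inr i) (fun _ => inl (inr ord0)) : ('I_m.+1 + 'I_1)%type -> J) DK.
have Dlast := defI_allfin (fun k : 'I_m => defI_eq S (inr (lift ord_max k) : J) (inl (inl k))).
by apply: defI_ext (defI_ex (defI_and DK' Dlast)) => z; split=> -[w ?]; exists w.
Qed.

Lemma defI_last_near m (K : F -> ('I_m.+1 -> F) -> Prop) (p' : 'I_m -> F) :
  defI S (fun z : ('I_m.+1 + 'I_1)%type -> F => K (z (inr ord0)) (fun i => z (inl i))) ->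
  defI S (fun z : ('I_1 + 'I_1)%type -> F => last_near K p' (z (inr ord0)) (z (inl ord0))).
Proof.
move=> DK; pose J := ((('I_1 + 'I_1) + 'I_m.+1) + 'I_m)%type.
have DK' := defI_preim (sumf (fun i => inl (inr i)) (fun _ => inl (inl (inr ord0)))
                          : ('I_m.+1 + 'I_1)%type -> J) DK.
have Dnear := defI_allfin (fun k : 'I_m =>
  defI_absdiff S (inl (inr (lift ord_max k)) : J) (inr k) (inl (inl (inr ord0)))).
have Dlast := defI_eq S (inl (inr ord_max) : J) (inl (inl (inl ord0))).
have := defI_ex (defI_param p' (defI_and DK' (defI_and Dnear Dlast))).
by apply: defI_ext => z; split=> [[w [? [? ?]]]|[w [? ? ?]]]; exists w.
Qed.

(* Limit points in F^m, by induction on m: first the first m coordinates, then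
   the last one among points whose first coordinates are close to them. *)
Lemma adherent_point_ord (m : nat) (K : F -> ('I_m -> F) -> Prop) (M : F) :
  defI S (fun z : ('I_m + 'I_1)%type -> F => K (z (inr ord0)) (fun i => z (inl i))) ->
  (forall d, 0 < d -> exists x, K d x) ->
  (forall d d' x, 0 < d -> d <= d' -> K d x -> K d' x) ->
  (forall d x, 0 < d -> d <= 1 -> K d x -> forall i, `|x i| <= M) ->
  exists p, forall d e, 0 < d -> 0 < e -> exists x, K d x /\ forall i, `|x i - p i| < e.
Proof.
elim: m K => [|m IHm] K DK neK mono bdK.
  exists (fun _ => 0) => d e d0 _; have [x Kx] := neK d d0.
  by exists x; split=> // -[].
have [p' adh_p'] : exists p', forall d e, 0 < d -> 0 < e ->
    exists y, drop_last K d y /\ forall i, `|y i - p' i| < e.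
  apply: IHm (defI_drop_last DK) _ _ _.
  - by move=> d d0; have [x Kx] := neK d d0; exists (fun k => x (lift ord_max k)), x.
  - by move=> d d' y d0 dd' [x [Kx xy]]; exists x; split => //; exact: mono Kx.
  - by move=> d y d0 d1 [x [Kx xy]] i; rewrite -xy; exact: bdK Kx _.
have [cs adh_cs] : exists cs, forall d e, 0 < d -> 0 < e ->
    exists c, last_near K p' d c /\ `|c - cs| < e.
  apply: adherent_value (defI_last_near p' DK) _ _ _.
  - move=> d d0; have [y [[x [Kx xy]] yp']] := adh_p' d d d0 d0.
    by exists (x ord_max), x; split => // k; rewrite xy.
  - move=> d d' c d0 dd' [x [Kx near xc]]; exists x; split => //; first exact: mono Kx.
    by move=> k; apply: lt_le_trans (near k) dd'.
  - by move=> d c d0 d1 [x [Kx _ <-]]; exact: bdK Kx _.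
exists (fun i => if unlift ord_max i is Some k then p' k else cs) => d e d0 e0.
have [d' d'0 [d'd d'e]] := pos_min d0 e0.
have [c [[x [Kx near xc]] c_cs]] := adh_cs d' e d'0 e0.
exists x; split; first exact: mono Kx.
by move=> i; case: unliftP => [k ->|->]; [exact: lt_le_trans (near k) d'e | rewrite xc].
Qed.

Lemma adherent_point (I : finType) (K : F -> (I -> F) -> Prop) (M : F) :
  defI S (fun z : (I + 'I_1)%type -> F => K (z (inr ord0)) (fun i => z (inl i))) ->
  (forall d, 0 < d -> exists x, K d x) ->
  (forall d d' x, 0 < d -> d <= d' -> K d x -> K d' x) ->
  (forall d x, 0 < d -> d <= 1 -> K d x -> forall i, `|x i| <= M) ->
  exists p, forall d e, 0 < d -> 0 < e -> exists x, K d x /\ forall i, `|x i - p i| < e.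
Proof.
move=> DK neK mono bdK.
pose Kord d (y : 'I_#|I| -> F) := K d (fun i => y (enum_rank i)).
have KordE d x : Kord d (fun k => x (enum_val k)) = K d x.
  by rewrite /Kord; congr (K d _); apply: functional_extensionality => i; rewrite enum_rankK.
have [p adh_p] : exists p, forall d e, 0 < d -> 0 < e ->
    exists y, Kord d y /\ forall k, `|y k - p k| < e.
  apply: (@adherent_point_ord #|I| Kord M).
  - exact: (defI_preim (sumf (fun i => inl (enum_rank i)) (fun _ => inr ord0)) DK).
  - by move=> d d0; have [x Kx] := neK d d0; exists (fun k => x (enum_val k)); rewrite KordE.
  - by move=> d d' y d0 dd' Ky; exact: mono Ky.
  - by move=> d y d0 d1 Ky k; rewrite -(enum_valK k); exact: bdK Ky _.
exists (fun i => p (enum_rank i)) => d e d0 e0.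
by have [y [Ky close_y]] := adh_p d e d0 e0; exists (fun i => y (enum_rank i)).
Qed.

End LimitPoints.

Section Fibres.
Variables (F : realFieldType) (S : DCLOM F) (n d : nat) (s : 'I_d -> 'I_n) (phi : F -> F)
  (X : ('I_n -> F) -> Prop) (f : ('I_n -> F) -> F).
Hypotheses (hphi : def_homeo01 S phi) (hX : definable S X) (hf : def_funF S X f)
  (hfc : contF_on X f).

Definition fibre_values (t : 'I_d -> F) (y : F) :=
  exists x, [/\ X x, (forall i, x (s i) = t i) & y = f x].

Lemma defI_fibre_values :
  defI S (fun z : ('I_d + 'I_1)%type -> F => fibre_values (fun i => z (inl i)) (z (inr ord0))).
Proof.
pose J := (('I_d + 'I_1) + 'I_n)%type.
have Dgraph := defI_preim (sumf (fun i => inr i) (fun _ => inl (inr ord0)) : ('I_n + 'I_1)%type -> J) hf.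
have Dover := defI_allfin (fun i : 'I_d => defI_eq S (inr (s i) : J) (inl (inl i))).
by apply: defI_ext (defI_ex (defI_and Dgraph Dover)) => z; split=> [[w [[? ?] ?]]|[w [? ? ?]]]; exists w.
Qed.

Lemma defI_projset : defI S (projset s X).
Proof.
pose J := ('I_d + 'I_n)%type.
have DX := defI_preim (fun i => inr i : J) (defI_of_D hX).
have Dover := defI_allfin (fun i : 'I_d => defI_eq S (inr (s i) : J) (inl i)).
by apply: defI_ext (defI_ex (defI_and DX Dover)) => z; split=> -[w [? ?]]; exists w.
Qed.

Lemma def_funF_fibre_inf (g : ('I_d -> F) -> F) :
  (forall t, projset s X t -> is_glb (fibre_values t) (g t)) -> def_funF S (projset s X) g.
Proof.
move=> g_glb; have := defI_and (defI_preim (fun i => inl i : ('I_d + 'I_1)%type) defI_projset)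
                               (defI_glb (A := fibre_values) defI_fibre_values).
apply: defI_ext => z; split=> [[Xz glb_z]|[Xz ->]]; split => //; last exact: g_glb.
exact: glb_unique glb_z (g_glb _ Xz).
Qed.

Definition lies_over (a : 'I_d -> F) (b : Comp s -> F) :=
  exists x, [/\ X x, forall i, x (s i) = a i & forall j, phi (x (val j)) = b j].

Lemma psiset_over a b :
  (exists x, psiset s phi X x /\ (forall i, x (s i) = a i) /\ (forall j, x (val j) = b j))
  <-> lies_over a b.
Proof.
split=> [[x [[x' [Xx' [xs xc]]] [xa xb]]]|[x [Xx xa xb]]].
  by exists x'; split=> // [i|j]; rewrite -?xa -?xb ?xs ?xc.
exists (fun i => if i \in codom s then x i else phi (x i)); split; last split.
- by exists x; split => //; split=> [i|j]; rewrite ?codom_f ?(negbTE (valP j)).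
- by move=> i; rewrite codom_f.
- by move=> j; rewrite (negbTE (valP j)).
Qed.

Definition chart (A : ('I_d -> F) -> Prop) (B : (Comp s -> F) -> Prop)
    (h : ('I_d -> F) -> (Comp s -> F)) :=
  [/\ openI A, forall a, A a -> B (h a), cont_on A h &
      forall a b, A a -> B b -> (lies_over a b <-> forall j, b j = h a j)].

Lemma good_point_chart t b : good_pt S s phi X t ->
  exists A B, [/\ openI A, A t, openI B & B b] /\
    ((forall a b', A a -> B b' -> ~ lies_over a b') \/ exists h, chart A B h).
Proof.
move=> /(_ b) [A [B [[_ oA At] [[_ oB Bb] alt]]]]; exists A, B; split => //.
case: alt => [empty|[h [hAB hcont _ hgraph]]]; [left|right].
  move=> a b' Aa Bb' /psiset_over [x [Yx [xa xb]]]; apply: (empty x Yx).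
  have -> : (fun i => x (s i)) = a by apply: functional_extensionality.
  by have -> : (fun j => x (val j)) = b' by apply: functional_extensionality.
exists h; split => // a b' Aa Bb'.
exact: iff_trans (iff_sym (psiset_over a b')) (hgraph a b' Aa Bb').
Qed.

Lemma chart_section A B h a : chart A B h -> A a -> lies_over a (h a).
Proof. by case=> _ hAB _ hgraph Aa; apply/(hgraph a (h a) Aa (hAB a Aa)). Qed.

(* Since phi^-1 is continuous, points whose s-coordinates and phi-images of the
   other coordinates are close to those of xs are close to xs. *)
Lemma close_of_close_coords (xs : 'I_n -> F) (r : F) : 0 < r ->
  exists2 eta, 0 < eta & forall x, (forall k, `|x (s k) - xs (s k)| < eta) ->
    (forall j : Comp s, `|phi (x (val j)) - phi (xs (val j))| < eta) ->
    forall i, `|x i - xs i| < r.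
Proof.
move=> r0; case: hphi => _ [_ [_ [_ [_ phi_inv_cont]]]].
have [r' r'0 near_inv] := @pos_min_fin F (Comp s)
  (fun j r' => forall u, `|phi u - phi (xs (val j))| < r' -> `|u - xs (val j)| < r)
  (fun j => phi_inv_cont (xs (val j)) r r0)
  (fun j _ _ _ le_r P u lt_u => P u (lt_le_trans lt_u le_r)).
have [eta eta0 [eta_r' eta_r]] := pos_min r'0 r0.
exists eta => // x near_s near_c i; case: (boolP (i \in codom s)) => [/codomP[k ->]|ci].
  exact: lt_le_trans (near_s k) eta_r.
exact: (near_inv (exist _ i ci) (x i) (lt_le_trans (near_c (exist _ i ci)) eta_r')).
Qed.

Lemma f_near_on_chart A B h t xs : chart A B h -> A t -> X xs ->
  (forall i, xs (s i) = t i) -> (forall j, phi (xs (val j)) = h t j) ->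
  forall e, 0 < e -> exists2 delta, 0 < delta & forall x, X x ->
    (forall i, `|x (s i) - t i| < delta) -> B (fun j => phi (x (val j))) ->
    `|f x - f xs| < e.
Proof.
move=> [oA _ hcont hgraph] At Xxs xs_t xs_h e e0.
have [r r0 near_f] := hfc Xxs e0.
have [eta eta0 near_x] := close_of_close_coords xs r0.
have [dh dh0 near_h] := hcont t At eta eta0.
have [rA rA0 boxA] := oA t At.
have [m m0 [m_rA m_dh]] := pos_min rA0 dh0.
have [delta delta0 [delta_m delta_eta]] := pos_min m0 eta0.
exists delta => // x Xx x_t Bx; apply: (near_f _ Xx).
have Ax : A (fun i => x (s i)).
  by apply: boxA => i; apply: lt_le_trans (x_t i) (le_trans delta_m m_rA).
have x_h : forall j, phi (x (val j)) = h (fun i => x (s i)) j.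
  by apply: (proj1 (hgraph _ _ Ax Bx)); exists x; split.
apply: near_x => [k|j]; first by rewrite xs_t; exact: lt_le_trans (x_t k) delta_eta.
rewrite x_h xs_h; apply: near_h Ax _ j => i.
exact: lt_le_trans (x_t i) (le_trans delta_m m_dh).
Qed.

(* Points of X over the dl-ball around t where f <= c + dl, recorded through the
   phi-images b of their remaining coordinates (a bounded set, as phi < 1). *)
Definition near_values (t : 'I_d -> F) (c dl : F) (b : Comp s -> F) :=
  exists x, [/\ X x, forall i, `|x (s i) - t i| < dl, f x <= c + dl &
                   forall j, b j = phi (x (val j))].

Lemma defI_near_values t c :
  defI S (fun z : (Comp s + 'I_1)%type -> F => near_values t c (z (inr ord0)) (fun j => z (inl j))).
Proof.
(* Coordinates: (b, dl) free, (x, f x) quantified, (t, c) parameters. *)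
pose U := (((Comp s + 'I_1) + ('I_n + 'I_1)) + ('I_d + 'I_1))%type.
pose bc j : U := inl (inl (inl j)); pose dl : U := inl (inl (inr ord0)).
pose xc i : U := inl (inr (inl i)); pose v : U := inl (inr (inr ord0)).
pose tc i : U := inr (inl i); pose cc : U := inr (inr ord0).
have Dgraph := defI_preim (sumf xc (fun _ => v)) hf.
have Dnear := defI_allfin (fun i => defI_absdiff S (xc (s i)) (tc i) dl).
have Dle := @defI_subst_add F S (fun a b => a <= b) (@defI_le F S) U v cc dl.
have Dphi := defI_allfin (fun j => defI_preim (sumf (fun _ => xc (val j)) (fun _ => bc j)) (proj1 hphi)).
have := defI_ex (defI_param (sumf t (fun _ => c)) (defI_and Dgraph (defI_and Dnear (defI_and Dle Dphi)))).
apply: defI_ext => z; split=> [[w [[Xw wf] [near [le bphi]]]]|[x [Xx near le bphi]]].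
  exists (fun i => w (inl i)); split => //; first by rewrite -wf.
  by move=> j; case: (bphi j).
exists (sumf x (fun _ => f x)); split; first by split.
by split=> //; split=> // j; split; last exact: bphi.
Qed.

(* The phi-images of approximating points cluster at some b, by the definable
   Bolzano-Weierstrass property. *)
Lemma near_points_cluster t c :
  (forall dl, 0 < dl -> exists x, [/\ X x, forall i, `|x (s i) - t i| < dl & f x <= c + dl]) ->
  exists b : Comp s -> F, forall dl e, 0 < dl -> 0 < e -> exists x,
    [/\ X x, forall i, `|x (s i) - t i| < dl, f x <= c + dl &
        forall j, `|phi (x (val j)) - b j| < e].
Proof.
move=> near; have [_ [phi01 _]] := hphi.
have ne dl : 0 < dl -> exists b, near_values t c dl b.
  by move=> dl0; have [x [Xx x_t fx]] := near dl dl0; exists (fun j => phi (x (val j))), x.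
have mono dl dl' b : 0 < dl -> dl <= dl' -> near_values t c dl b -> near_values t c dl' b.
  move=> _ dl_dl' [x [Xx x_t fx b_x]]; exists x; split => // [i|].
    exact: lt_le_trans (x_t i) dl_dl'.
  by apply: le_trans fx _; rewrite lerD2l.
have bounded dl b : 0 < dl -> dl <= 1 -> near_values t c dl b -> forall j, `|b j| <= 1.
  move=> _ _ [x [_ _ _ b_x]] j; rewrite b_x.
  by have /andP[? ?] := phi01 (x (val j)); rewrite ger0_norm ?ltW.
have [b adh_b] := adherent_point (@dc_complete F S) (defI_near_values t c) ne mono bounded.
exists b => dl e dl0 e0; have [b' [[x [Xx x_t fx b'_x]] b'_b]] := adh_b dl e dl0 e0.
by exists x; split => // j; rewrite -b'_x.
Qed.

(* The approximating points cluster at some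
   (t, b); t being good, psi(X) is a chart near (t, b), and continuity of the
   chart and of f carries the bound to the point of the chart over t. *)
Lemma fibre_attains t c : good_pt S s phi X t ->
  (forall dl, 0 < dl -> exists x, [/\ X x, forall i, `|x (s i) - t i| < dl & f x <= c + dl]) ->
  exists x, [/\ X x, forall i, x (s i) = t i & f x <= c].
Proof.
move=> good near; have [b adh_b] := near_points_cluster near.
have [A [B [[oA At oB Bb] alt]]] := good_point_chart b good.
have [rA rA0 boxA] := oA t At; have [rB rB0 boxB] := oB b Bb.
have in_box dl : 0 < dl -> dl <= rA -> exists x, [/\ X x, A (fun i => x (s i)),
    B (fun j => phi (x (val j))), forall i, `|x (s i) - t i| < dl & f x <= c + dl].
  move=> dl0 dl_rA; have [x [Xx x_t fx x_b]] := adh_b dl rB dl0 rB0.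
  exists x; split => //; [apply: boxA => i; exact: lt_le_trans (x_t i) dl_rA | exact: boxB].
case: alt => [empty|[h ch]].
  have [x [Xx Ax Bx _ _]] := in_box rA rA0 (lexx _).
  by case: (empty _ _ Ax Bx); exists x.
have [xs [Xxs xs_t xs_h]] := chart_section ch At.
exists xs; split => //; apply/ler_addgt0Pr => eta eta0.
have eta2 : 0 < eta / 2 by rewrite divr_gt0.
have [delta delta0 near_f] := f_near_on_chart ch At Xxs xs_t xs_h eta2.
have [m m0 [m_rA m_delta]] := pos_min rA0 delta0.
have [dl dl0 [dl_m dl_eta]] := pos_min m0 eta2.
have [x [Xx _ Bx x_t fx]] := in_box dl dl0 (le_trans dl_m m_rA).
have := near_f x Xx (fun i => lt_le_trans (x_t i) (le_trans dl_m m_delta)) Bx.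
by rewrite ltr_distl => /andP[? ?]; lra.
Qed.

End Fibres.

Section FibreInfimum.
Variables (F : realFieldType) (S : DCLOM F) (n d : nat) (s : 'I_d -> 'I_n) (phi : F -> F)
  (X : ('I_n -> F) -> Prop) (f : ('I_n -> F) -> F).
Hypotheses (hphi : def_homeo01 S phi) (hf : def_funF S X f) (hfc : contF_on X f)
  (hsp : special_submanifold S s phi X) (hpos : forall x, X x -> 0 < f x).

Lemma fibre_glb_exists t : projset s X t -> exists k, is_glb (fibre_values s X f t) k.
Proof.
move=> [x [Xx x_t]]; apply: (exists_glb (@dc_complete F S)).
- pose swap := sumf (fun i => inr i) (fun _ => inl ord0) : ('I_d + 'I_1)%type -> ('I_1 + 'I_d)%type.
  exact: (defI_param t (defI_preim swap (defI_fibre_values s hf))).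
- by exists (f x), x.
- by exists 0 => y [x' [Xx' _ ->]]; exact/ltW/hpos.
Qed.

Variable g : ('I_d -> F) -> F.
Hypothesis g_glb : forall t, projset s X t -> is_glb (fibre_values s X f t) (g t).

Lemma fibre_point_near_inf t dl : projset s X t -> 0 < dl ->
  exists x, [/\ X x, forall i, x (s i) = t i & f x < g t + dl].
Proof. by move=> ht dl0; have [_ [[x [Xx x_t ->]] fx]] := glb_approx (g_glb ht) dl0; exists x. Qed.

Lemma fibre_inf_pos t : projset s X t -> 0 < g t.
Proof.
move=> ht; rewrite ltNge; apply/negP => g_le0.
have [x [Xx _ fx]] : exists x, [/\ X x, forall i, x (s i) = t i & f x <= 0].
  apply: (fibre_attains (c := 0) hphi hf hfc (hsp ht)) => dl dl0.
  have [x [Xx x_t fx]] := fibre_point_near_inf ht dl0.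
  exists x; split => // [i|]; first by rewrite x_t subrr normr0.
  lra.
by have := hpos Xx; rewrite ltNge fx.
Qed.

(* Lower semicontinuity: a drop of g near t would produce, by fibre_attains, a
   point over t below the infimum g t. *)
Lemma fibre_inf_lsc t e : projset s X t -> 0 < e ->
  exists2 delta, 0 < delta & forall t', projset s X t' ->
    (forall i, `|t' i - t i| < delta) -> g t - e < g t'.
Proof.
move=> ht e0; apply: NNPP => no_delta.
have [x [Xx x_t fx]] : exists x, [/\ X x, forall i, x (s i) = t i & f x <= g t - e].
  apply: (fibre_attains (c := g t - e) hphi hf hfc (hsp ht)) => dl dl0.
  have [t' [ht' t'_t g_t']] : exists t', [/\ projset s X t', forall i, `|t' i - t i| < dl &
                                          g t' <= g t - e].
    apply: NNPP => no_t'; apply: no_delta; exists dl => // t' ht' t'_t.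
    by rewrite ltNge; apply/negP => ?; apply: no_t'; exists t'.
  have [x [Xx x_t' fx]] := fibre_point_near_inf ht' dl0.
  by exists x; split => // [i|]; [rewrite x_t' | lra].
by have := proj1 (g_glb ht) (f x) (ex_intro _ x (And3 Xx x_t erefl)); lra.
Qed.

(* Upper semicontinuity: take a point x0 over t with f x0 close to g t; near
   (t, psi(x0)) the set psi(X) is a chart, whose points over nearby t' have f
   close to f x0. *)
Lemma fibre_inf_usc t e : projset s X t -> 0 < e ->
  exists2 delta, 0 < delta & forall t', projset s X t' ->
    (forall i, `|t' i - t i| < delta) -> g t' < g t + e.
Proof.
move=> ht e0; have e2 : 0 < e / 2 by rewrite divr_gt0.
have [x0 [Xx0 x0_t fx0]] := fibre_point_near_inf ht e2.
pose b0 : Comp s -> F := fun j => phi (x0 (val j)).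
have over_x0 : lies_over phi X t b0 by exists x0; split.
have [A [B [[oA At _ Bb] [empty|[h ch]]]]] := good_point_chart b0 (hsp ht).
  by case: (empty _ _ At Bb over_x0).
have [_ hAB _ hgraph] := ch.
have x0_h := proj1 (hgraph _ _ At Bb) over_x0.
have [delta delta0 near_f] := f_near_on_chart hphi hfc ch At Xx0 x0_t x0_h e2.
have [rA rA0 boxA] := oA t At.
have [m m0 [m_delta m_rA]] := pos_min delta0 rA0.
exists m => // t' ht' t'_t.
have At' : A t' by apply: boxA => i; exact: lt_le_trans (t'_t i) m_rA.
have [x' [Xx' x'_t' x'_h]] := chart_section ch At'.
have Bx' : B (fun j => phi (x' (val j))).
  by rewrite (_ : (fun j => _) = h t'); [exact: hAB | apply: functional_extensionality].
have x'_t i : `|x' (s i) - t i| < delta by rewrite x'_t'; exact: lt_le_trans (t'_t i) m_delta.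
have := near_f x' Xx' x'_t Bx'.
have := proj1 (g_glb ht') (f x') (ex_intro _ x' (And3 Xx' x'_t' erefl)).
by rewrite ltr_distl => ? /andP[? ?]; lra.
Qed.

Lemma fibre_inf_continuous : contF_on (projset s X) g.
Proof.
move=> t ht e e0.
have [d1 d10 lsc] := fibre_inf_lsc ht e0; have [d2 d20 usc] := fibre_inf_usc ht e0.
have [delta delta0 [delta_d1 delta_d2]] := pos_min d10 d20.
exists delta => // t' ht' t'_t; rewrite ltr_distl.
have := lsc t' ht' (fun i => lt_le_trans (t'_t i) delta_d1).
have := usc t' ht' (fun i => lt_le_trans (t'_t i) delta_d2).
by move=> ? ?; apply/andP; split; lra.
Qed.

End FibreInfimum.

Theorem proposition2p9 (F : realFieldType) (S : DCLOM F) (n d : nat)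
  (s : 'I_d -> 'I_n) (phi : F -> F) (X : ('I_n -> F) -> Prop)
  (f : ('I_n -> F) -> F) :
  coord_proj s ->
  def_homeo01 S phi ->
  definable S X ->
  has_dim X d ->
  special_submanifold S s phi X ->
  (forall x, X x -> 0 < f x) ->
  def_funF S X f ->
  contF_on X f ->
  exists g : ('I_d -> F) -> F,
    [/\ forall t, projset s X t ->
          is_glb (fun y => exists x, [/\ X x, (forall i, x (s i) = t i) & y = f x]) (g t),
        forall t, projset s X t -> 0 < g t,
        def_funF S (projset s X) g &
        contF_on (projset s X) g].
Proof.
move=> _ hphi hX _ hsp hpos hf hfc.
pose g t := epsilon (inhabits 0) (is_glb (fibre_values s X f t)).
have g_glb t : projset s X t -> is_glb (fibre_values s X f t) (g t).
  by move=> ht; apply: epsilon_spec; have [k glb_k] := fibre_glb_exists hf hpos ht; exists k.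
exists g; split.
- exact: g_glb.
- exact: (fibre_inf_pos hphi hf hfc hsp hpos g_glb).
- exact: (def_funF_fibre_inf hX hf g_glb).
- exact: (fibre_inf_continuous hphi hf hfc hsp g_glb).
Qed.
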